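(* Let $X$ be a nonempty set, $Y$ a nonempty set, and $F\colon X^*\to Y$ a function. The following assertions are equivalent. (i) $F$ is unarily idempotizable, i.e., $\mathrm{ran}(F_1)=\mathrm{ran}(F^{\flat})$ and $F_1$ is one-to-one. (ii) $F_1$ is a bijection from $X$ onto $\mathrm{ran}(F^{\flat})$ and there is a unique unarily idempotent $\varepsilon$-standard operation $H\colon X^*\to X\cup\{\varepsilon\}$, namely the one with $H^{\flat}=F_1^{-1}\circ F^{\flat}$, such that $F^{\flat}=F_1\circ H^{\flat}$. (iii) There exist a unarily idempotent $\varepsilon$-standard operation $H\colon X^*\to X\cup\{\varepsilon\}$ and a bijection $f$ from $X$ onto $\mathrm{ran}(F^{\flat})$ such that $F^{\flat}=f\circ H^{\flat}$. Moreover, in case (iii) we necessarily have $f=F_1$ and $H^{\flat}=F_1^{-1}\circ F^{\flat}$.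
   Context: $X^*=\bigcup_{n\geqslant 0}X^n$ is the set of all finite tuples over $X$, where $X^0=\{\varepsilon\}$ and $\varepsilon$ is the empty tuple (assumed not to be an element of $X$). For $F\colon X^*\to Y$ and $n\geqslant 0$, $F_n=F|_{X^n}$ is the $n$-ary part of $F$ (with $X^1$ identified with $X$), and $F^{\flat}=F|_{X^*\setminus\{\varepsilon\}}$ is its non-nullary part. A function $F\colon X^*\to Y$ is standard if $F(\mathbf{x})=F(\varepsilon)$ holds only if $\mathbf{x}=\varepsilon$. A variadic operation on $X$ is a function $F\colon X^*\to X\cup\{\varepsilon\}$; it is $\varepsilon$-standard if it is standard and $F(\varepsilon)=\varepsilon$. An $\varepsilon$-standard operation $H$ is unarily idempotent if $H_1$ is the identity map of $X$. *)

(* X^* is modelled as [list X]; X ∪ {ε} as [option X] with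
   [None] playing the role of ε. *)
From Stdlib Require Import List.
Import ListNotations.

Definition unary_part {X Y : Type} (F : list X -> Y) : X -> Y :=
  fun x => F [x].

Definition ran_flat {X Y : Type} (F : list X -> Y) (y : Y) : Prop :=
  exists s, s <> [] /\ F s = y.

Definition ran {X Y : Type} (g : X -> Y) (y : Y) : Prop := exists x, g x = y.

Definition standard {X Y : Type} (F : list X -> Y) : Prop :=
  forall s, F s = F [] -> s = [].

Definition eps_standard {X : Type} (H : list X -> option X) : Prop :=
  standard H /\ H [] = None.

Definition unarily_idempotent {X : Type} (H : list X -> option X) : Prop :=
  eps_standard H /\ forall x, H [x] = Some x.

Definition one_to_one {X Y : Type} (g : X -> Y) : Prop :=
  forall x1 x2, g x1 = g x2 -> x1 = x2.

Definition bijection_onto {X Y : Type} (g : X -> Y) (S : Y -> Prop) : Prop :=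
  one_to_one g /\ (forall y, ran g y <-> S y).

(* F^flat = f ∘ H^flat  (H ε-standard, so H^flat takes values in X). *)
Definition flat_factors {X Y : Type} (F : list X -> Y) (f : X -> Y)
    (H : list X -> option X) : Prop :=
  forall s, s <> [] -> exists x, H s = Some x /\ F s = f x.

(* H^flat = g^{-1} ∘ F^flat, where g^{-1} is the inverse of the injective g
   on its range: for every nonempty s, H s is the (unique) x with g x = F s. *)
Definition flat_is_inv_comp {X Y : Type} (H : list X -> option X)
    (g : X -> Y) (F : list X -> Y) : Prop :=
  forall s, s <> [] -> exists x, g x = F s /\ H s = Some x.

Definition unarily_idempotizable {X Y : Type} (F : list X -> Y) : Prop :=
  (forall y, ran (unary_part F) y <-> ran_flat F y) /\ one_to_one (unary_part F).

(* F^flat can only factor through F_1 via a unarily idempotent H, since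
   evaluating F^flat = f ∘ H^flat on a singleton gives f = F_1; injectivity
   of F_1 then pins H^flat down as F_1^{-1} ∘ F^flat.  Conversely, when
   ran(F_1) = ran(F^flat) and F_1 is injective, choosing for every nonempty
   tuple s the preimage of F s under F_1 defines such an H. *)

From Stdlib Require Import List ClassicalEpsilon FunctionalExtensionality.
Import ListNotations.

Section UnaryIdempotization.

Variables (X Y : Type) (F : list X -> Y).

Lemma unarily_idempotizableE :
  unarily_idempotizable F <-> bijection_onto (unary_part F) (ran_flat F).
Proof. split; intros [H1 H2]; split; assumption. Qed.

Lemma flat_factors_inv_comp (g : X -> Y) (H : list X -> option X) :
  flat_factors F g H -> flat_is_inv_comp H g F.
Proof.
  intros HF s Hs; destruct (HF s Hs) as [x [Hx Fx]].
  exists x; split; [symmetry|]; assumption.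
Qed.

Lemma flat_factors_unary_part (f : X -> Y) (H : list X -> option X) :
  (forall x, H [x] = Some x) -> flat_factors F f H -> f = unary_part F.
Proof.
  intros Hid HF; apply functional_extensionality; intros x.
  destruct (HF [x]) as [x' [Hx' Fx']]; [discriminate|].
  rewrite Hid in Hx'; injection Hx' as <-.
  symmetry; exact Fx'.
Qed.

Lemma flat_factors_unique (g : X -> Y) (H H' : list X -> option X) :
  one_to_one g -> H [] = H' [] ->
  flat_factors F g H -> flat_factors F g H' -> H = H'.
Proof.
  intros Hinj Hnil HF HF'; apply functional_extensionality; intros [|a s].
  - exact Hnil.
  - destruct (HF (a :: s)) as [x [Hx Fx]]; [discriminate|].
    destruct (HF' (a :: s)) as [x' [Hx' Fx']]; [discriminate|].
    rewrite Hx, Hx'; f_equal; apply Hinj; congruence.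
Qed.

(* A nonempty tuple supplies its own witness that X is inhabited, so no
   global nonemptiness assumption is needed for the choice. *)
Definition unary_preimage_op (s : list X) : option X :=
  match s with
  | [] => None
  | a :: _ => Some (epsilon (inhabits a) (fun x => unary_part F x = F s))
  end.

Section Idempotizable.

Hypothesis HF : unarily_idempotizable F.

Lemma unary_preimage_opP (a : X) (s : list X) :
  unary_part F (epsilon (inhabits a) (fun x => unary_part F x = F (a :: s)))
  = F (a :: s).
Proof.
  apply epsilon_spec, (proj1 HF); exists (a :: s); split; [discriminate | reflexivity].
Qed.

Lemma unary_preimage_op_idempotent : unarily_idempotent unary_preimage_op.
Proof.
  split; [split|].
  - intros [|a s] E; [reflexivity | discriminate].
  - reflexivity.
  - intros x; cbn; f_equal; apply (proj2 HF), unary_preimage_opP.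
Qed.

Lemma unary_preimage_op_factors :
  flat_factors F (unary_part F) unary_preimage_op.
Proof.
  intros [|a s] Hs; [congruence|].
  eexists; split; [reflexivity|].
  symmetry; apply unary_preimage_opP.
Qed.

End Idempotizable.

Lemma unarily_idempotizable_of_factors (H : list X -> option X) (f : X -> Y) :
  unarily_idempotent H -> bijection_onto f (ran_flat F) -> flat_factors F f H ->
  unarily_idempotizable F.
Proof.
  intros [_ Hid] Hf HFH.
  rewrite unarily_idempotizableE, <- (flat_factors_unary_part f H Hid HFH).
  exact Hf.
Qed.

End UnaryIdempotization.

Theorem corollary2p3 (X Y : Type) (hX : inhabited X) (hY : inhabited Y)
    (F : list X -> Y) :
  (unarily_idempotizable F <->
     (bijection_onto (unary_part F) (ran_flat F) /\
      exists H : list X -> option X,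
        (unarily_idempotent H /\ flat_factors F (unary_part F) H) /\
        (forall H' : list X -> option X,
           unarily_idempotent H' /\ flat_factors F (unary_part F) H' -> H' = H) /\
        flat_is_inv_comp H (unary_part F) F)) /\
  (unarily_idempotizable F <->
     exists (H : list X -> option X) (f : X -> Y),
       unarily_idempotent H /\ bijection_onto f (ran_flat F) /\
       flat_factors F f H) /\
  (forall (H : list X -> option X) (f : X -> Y),
     unarily_idempotent H -> bijection_onto f (ran_flat F) ->
     flat_factors F f H ->
     f = unary_part F /\ flat_is_inv_comp H (unary_part F) F).
Proof.
  split; [|split].
  - split.
    + intros HF; split; [now apply unarily_idempotizableE|].
      pose proof (unary_preimage_op_factors X Y F HF) as Hfac.
      exists (unary_preimage_op X Y F).
      split; [split; [now apply unary_preimage_op_idempotent | exact Hfac]|].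
      split; [|now apply flat_factors_inv_comp].
      intros H' [[[_ Hnil] _] HF'].
      apply (flat_factors_unique X Y F (unary_part F)); [apply HF | exact Hnil | exact HF' | exact Hfac].
    + intros [Hb _]; now apply unarily_idempotizableE.
  - split.
    + intros HF; exists (unary_preimage_op X Y F), (unary_part F).
      split; [now apply unary_preimage_op_idempotent|].
      split; [now apply unarily_idempotizableE | now apply unary_preimage_op_factors].
    + intros (H & f & HH & Hf & HFH); exact (unarily_idempotizable_of_factors X Y F H f HH Hf HFH).
  - intros H f [_ Hid] _ HFH.
    pose proof (flat_factors_unary_part X Y F f H Hid HFH) as Ef.
    split; [exact Ef|]; subst f; now apply flat_factors_inv_comp.
Qed.
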